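(* (1) If $t_1 : X_1 \to X'_1$ with proof label $\theta_1$ and $t_2 : X_2\to X'_2$ with proof label $\theta_2$ are connected CCSK$^{\mathrm P}$ transitions (each forward or backward), then $\theta_1\frown\theta_2$. (2) If $\theta_1\frown\theta_2$, then there exist CCSK$^{\mathrm P}$ transitions $t_1: X_1\to X'_1$ with proof label $\theta_1$ and $t_2: X_2\to X'_2$ with proof label $\theta_2$ (each forward or backward) such that $t_1$ and $t_2$ are connected.
   Context: Names $\mathsf N$ with a bijection $\overline{\cdot}$ onto disjoint co-names $\overline{\mathsf N}$; labels $\mathsf L=\mathsf N\cup\overline{\mathsf N}\cup\{\tau\}$ ($\alpha$ ranges over $\mathsf L$, $\lambda$ over $\mathsf L\setminus\{\tau\}$, $\overline\tau=\tau$); $\mathsf K$ a denumerable set of keys. CCSK processes: $X,Y::=\mathbf 0\mid\alpha.X\mid X\backslash\lambda\mid X+Y\mid X|Y\mid\alpha[k].X$; $\mathrm{keys}(X)$ is the set of keys occurring in $X$; $X$ is standard if $\mathrm{keys}(X)=\emptyset$. Directions $D\in\{\mathrm L,\mathrm R\}$, $\bar{\mathrm L}=\mathrm R$, $\bar{\mathrm R}=\mathrm L$. Proof keyed labels: $\theta::=\upsilon\,\alpha[k]\mid\upsilon\langle\upsilon_1\lambda[k],\upsilon_2\overline\lambda[k]\rangle$ with $\upsilon,\upsilon_1,\upsilon_2\in\{|_{\mathrm L},|_{\mathrm R},+_{\mathrm L},+_{\mathrm R}\}^*$; $\ell(\upsilon\alpha[k])=\alpha$, $\ell(\upsilon\langle\cdots\rangle)=\tau$,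 $\mathrm{key}(\theta)=k$. Forward transitions $X\xrightarrow{\theta}X'$ of CCSK$^{\mathrm P}$ form the least relation closed under: (act) $\alpha.X\xrightarrow{\alpha[k]}\alpha[k].X$ for any $k$, if $\mathrm{keys}(X)=\emptyset$; (pre) if $X\xrightarrow\theta X'$ and $\mathrm{key}(\theta)\ne k$ then $\alpha[k].X\xrightarrow\theta\alpha[k].X'$; (res) if $X\xrightarrow\theta X'$ and $\ell(\theta)\notin\{\lambda,\overline\lambda\}$ then $X\backslash\lambda\xrightarrow\theta X'\backslash\lambda$; (par) if $X\xrightarrow\theta X'$ and $\mathrm{key}(\theta)\notin\mathrm{keys}(Y)$ then $X|Y\xrightarrow{|_{\mathrm L}\theta}X'|Y$ and $Y|X\xrightarrow{|_{\mathrm R}\theta}Y|X'$; (syn) if $X\xrightarrow{\upsilon_1\lambda[k]}X'$ and $Y\xrightarrow{\upsilon_2\overline\lambda[k]}Y'$ then $X|Y\xrightarrow{\langle\upsilon_1\lambda[k],\upsilon_2\overline\lambda[k]\rangle}X'|Y'$; (sum) if $X\xrightarrow\theta X'$ and $\mathrm{keys}(Y)=\emptyset$ then $X+Y\xrightarrow{+_{\mathrm L}\theta}X'+Y$ and $Y+X\xrightarrow{+_{\mathrm R}\theta}Y+X'$. Backward transitions are the converse: a backward transition from $Y$ to $X$ with label $\theta$ exists iff $X\xrightarrow\theta Y$. A transition has a source, target and proof label; a path is a finite sequence of (forward or backward) transitions each of whose target is the source of the next. A process is reachable if there is a path from a standard process to it; only reachable processes are considered. Transitions $t_1,t_2$ are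 connected if there is a path from the source of one to the target of the other. Connectivity $\frown$ on proof keyed labels is the least relation closed under (a label ''is a prefix'' if it has the form $\beta[k']$; $\theta_{\mathrm L},\theta_{\mathrm R}$ are the components of a synchronisation label): (A1) $\alpha[k]\frown\theta$; (A2) $\theta\frown\alpha[k]$ if $\theta$ is not a prefix; (P1) $|_D\theta\frown|_D\theta'$ if $\theta\frown\theta'$; (P2) $|_D\theta\frown|_{\bar D}\theta'$; (C1) $+_D\theta\frown+_D\theta'$ if $\theta\frown\theta'$; (C2) $+_D\theta\frown+_{\bar D}\theta'$; (S1) $|_D\theta\frown\langle\theta_{\mathrm L},\theta_{\mathrm R}\rangle$ if $\theta\frown\theta_D$; (S2) $\langle\theta_{\mathrm L},\theta_{\mathrm R}\rangle\frown|_D\theta$ if $\theta_D\frown\theta$; (S3) $\langle\theta_1,\theta_2\rangle\frown\langle\theta'_1,\theta'_2\rangle$ if $\theta_1\frown\theta'_1$ and $\theta_2\frown\theta'_2$. *)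

From Stdlib Require Import List Relation_Operators.
Import ListNotations.

(* Names N = nat, co-names are their bar-images; keys K = nat. *)
Definition name := nat.
Definition key := nat.

Inductive vis : Type := VN (a : name) | VC (a : name).
Inductive label : Type := Vis (l : vis) | Tau.

Definition co_vis (l : vis) : vis :=
  match l with VN a => VC a | VC a => VN a end.
Definition co_label (a : label) : label :=
  match a with Vis l => Vis (co_vis l) | Tau => Tau end.

Inductive proc : Type :=
| Nil : proc
| Pref : label -> proc -> proc
| Res : proc -> vis -> proc
| Sum : proc -> proc -> proc
| Par : proc -> proc -> proc
| Done : label -> key -> proc -> proc.    (* alpha[k].X *)

Fixpoint keys (X : proc) : list key :=
  match X with
  | Nil => []
  | Pref _ X => keys X
  | Res X _ => keys X
  | Sum X Y => keys X ++ keys Y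
  | Par X Y => keys X ++ keys Y
  | Done _ k X => k :: keys X
  end.

Definition standard (X : proc) : Prop := keys X = [].

Inductive side : Type := SL | SR.
Definition co_side (d : side) : side := match d with SL => SR | SR => SL end.

Inductive op : Type := OPar (d : side) | OSum (d : side).

(* proof keyed labels:
   PAct u a k           = u alpha[k]
   PSyn u u1 l u2 k     = u < u1 lambda[k] , u2 co-lambda[k] > *)
Inductive plabel : Type :=
| PAct : list op -> label -> key -> plabel
| PSyn : list op -> list op -> vis -> list op -> key -> plabel.

Definition lab (t : plabel) : label :=
  match t with PAct _ a _ => a | PSyn _ _ _ _ _ => Tau end.
Definition pkey (t : plabel) : key :=
  match t with PAct _ _ k => k | PSyn _ _ _ _ k => k end.

Definition pre_op (o : op) (t : plabel) : plabel :=
  match t with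
  | PAct u a k => PAct (o :: u) a k
  | PSyn u u1 l u2 k => PSyn (o :: u) u1 l u2 k
  end.
Definition ppar (d : side) := pre_op (OPar d).
Definition psum (d : side) := pre_op (OSum d).

Definition psyn (u1 : list op) (l : vis) (u2 : list op) (k : key) : plabel :=
  PSyn [] u1 l u2 k.
Definition comp (d : side) (u1 : list op) (l : vis) (u2 : list op) (k : key)
  : plabel :=
  match d with
  | SL => PAct u1 (Vis l) k
  | SR => PAct u2 (Vis (co_vis l)) k
  end.

Definition is_prefix (t : plabel) : Prop :=
  exists a k, t = PAct [] a k.

Inductive fwd : proc -> plabel -> proc -> Prop :=
| f_act : forall a X k, standard X -> fwd (Pref a X) (PAct [] a k) (Done a k X)
| f_pre : forall a k X t X', fwd X t X' -> pkey t <> k ->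
    fwd (Done a k X) t (Done a k X')
| f_res : forall X t X' l, fwd X t X' ->
    lab t <> Vis l -> lab t <> Vis (co_vis l) ->
    fwd (Res X l) t (Res X' l)
| f_parL : forall X t X' Y, fwd X t X' -> ~ In (pkey t) (keys Y) ->
    fwd (Par X Y) (ppar SL t) (Par X' Y)
| f_parR : forall X t X' Y, fwd X t X' -> ~ In (pkey t) (keys Y) ->
    fwd (Par Y X) (ppar SR t) (Par Y X')
| f_syn : forall X X' Y Y' u1 u2 l k,
    fwd X (PAct u1 (Vis l) k) X' ->
    fwd Y (PAct u2 (Vis (co_vis l)) k) Y' ->
    fwd (Par X Y) (psyn u1 l u2 k) (Par X' Y')
| f_sumL : forall X t X' Y, fwd X t X' -> standard Y ->
    fwd (Sum X Y) (psum SL t) (Sum X' Y)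
| f_sumR : forall X t X' Y, fwd X t X' -> standard Y ->
    fwd (Sum Y X) (psum SR t) (Sum Y X').

Inductive direction : Type := Fw | Bw.
Record trans : Type := mkTrans {
  tdir : direction; tsrc : proc; tlab : plabel; ttgt : proc }.

Definition valid (t : trans) : Prop :=
  match tdir t with
  | Fw => fwd (tsrc t) (tlab t) (ttgt t)
  | Bw => fwd (ttgt t) (tlab t) (tsrc t)
  end.

Definition step (X Y : proc) : Prop :=
  exists t, fwd X t Y \/ fwd Y t X.
Definition path (X Y : proc) : Prop := clos_refl_trans proc step X Y.

Definition reachable (X : proc) : Prop :=
  exists S, standard S /\ path S X.

Definition connected (t1 t2 : trans) : Prop :=
  path (tsrc t1) (ttgt t2) \/ path (tsrc t2) (ttgt t1).

Inductive conn : plabel -> plabel -> Prop :=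
| A1 : forall a k t, conn (PAct [] a k) t
| A2 : forall t a k, ~ is_prefix t -> conn t (PAct [] a k)
| P1 : forall d t t', conn t t' -> conn (ppar d t) (ppar d t')
| P2 : forall d t t', conn (ppar d t) (ppar (co_side d) t')
| C1 : forall d t t', conn t t' -> conn (psum d t) (psum d t')
| C2 : forall d t t', conn (psum d t) (psum (co_side d) t')
| S1 : forall d t u1 l u2 k, conn t (comp d u1 l u2 k) ->
    conn (ppar d t) (psyn u1 l u2 k)
| S2 : forall d t u1 l u2 k, conn (comp d u1 l u2 k) t ->
    conn (psyn u1 l u2 k) (ppar d t)
| S3 : forall u1 l u2 k u1' l' u2' k',
    conn (comp SL u1 l u2 k) (comp SL u1' l' u2' k') ->
    conn (comp SR u1 l u2 k) (comp SR u1' l' u2' k') ->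
    conn (psyn u1 l u2 k) (psyn u1' l' u2' k').

(* (1) A transition keeps the top-level shape of a process and acts only inside
   its immediate subterms, so a path between two processes projects to paths
   between their subterms.  Induction on the derivation of one transition,
   combined with a case analysis of the rule deriving the other, then matches
   every pair of rules with a clause of the connectivity relation. *)

From Stdlib Require Import List Relation_Operators Lia.
Import ListNotations.

Lemma path_refl X : path X X.
Proof. apply rt_refl. Qed.

Lemma path_trans X Y Z : path X Y -> path Y Z -> path X Z.
Proof. apply rt_trans. Qed.

Lemma fwd_path X t Y : fwd X t Y -> path X Y.
Proof. intros H; apply rt_step; exists t; left; exact H. Qed.

Lemma path_sym X Y : path X Y -> path Y X.
Proof.
  induction 1 as [X Y [t Hstep] | X | X Y Z _ IHXY _ IHYZ].
  - apply rt_step; exists t; tauto.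
  - apply path_refl.
  - exact (path_trans _ _ _ IHYZ IHXY).
Qed.

Inductive shape : Type := ShNil | ShPrefix | ShRes | ShSum | ShPar.

(* [Pref] and [Done] share a shape, since rule (act) turns one into the other. *)
Definition shape_of (P : proc) : shape :=
  match P with
  | Nil => ShNil
  | Pref _ _ | Done _ _ _ => ShPrefix
  | Res _ _ => ShRes
  | Sum _ _ => ShSum
  | Par _ _ => ShPar
  end.

Definition sub_l (P : proc) : proc :=
  match P with
  | Pref _ X | Done _ _ X | Res X _ | Sum X _ | Par X _ => X
  | Nil => Nil
  end.

Definition sub_r (P : proc) : proc :=
  match P with Sum _ Y | Par _ Y => Y | _ => Nil end.

Lemma fwd_shape P t Q : fwd P t Q ->
  shape_of P = shape_of Q /\ path (sub_l P) (sub_l Q) /\ path (sub_r P) (sub_r Q).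
Proof.
  induction 1; simpl; repeat split; auto using path_refl; eapply fwd_path; eauto.
Qed.

Lemma path_shape P Q : path P Q ->
  shape_of P = shape_of Q /\ path (sub_l P) (sub_l Q) /\ path (sub_r P) (sub_r Q).
Proof.
  induction 1 as [P Q [t [H | H]] | P | P Q R _ (Es1 & L1 & R1) _ (Es2 & L2 & R2)].
  - exact (fwd_shape _ _ _ H).
  - destruct (fwd_shape _ _ _ H) as (Es & L & R); auto using path_sym.
  - repeat split; apply path_refl.
  - repeat split; [congruence | eapply path_trans; eauto ..].
Qed.

Lemma conn_to_prefix t a k : conn t (PAct [] a k).
Proof.
  destruct t as [[|o u] b k' | u u1 l u2 k'].
  - apply A1.
  - apply A2; intros (? & ? & [=]).
  - apply A2; intros (? & ? & [=]).
Qed.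

Lemma path_fwd_conn P th1 P' : fwd P th1 P' ->
  forall Q th2 Q', path P Q -> fwd Q th2 Q' -> conn th1 th2.
Proof.
  induction 1 as [a X k _ | a k X th X' _ IH _ | X th X' l _ IH _ _
                 | X th X' Y _ IH _ | X th X' Y _ IH _
                 | X X' Y Y' u1 u2 l k _ IHX _ IHY
                 | X th X' Y _ IH _ | X th X' Y _ IH _ ];
    intros Q th2 Q' Hp H2; [apply A1 |..];
    destruct H2; apply path_shape in Hp; destruct Hp as (Hsh & Hl & Hr);
    try discriminate; simpl in Hl, Hr.
  - apply conn_to_prefix.
  - eauto.
  - eauto.
  - apply P1; eauto.
  - exact (P2 SL _ _).
  - apply (S1 SL); simpl; eauto.
  - exact (P2 SR _ _).
  - apply P1; eauto.
  - apply (S1 SR); simpl; eauto.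
  - apply (S2 SL); simpl; eauto.
  - apply (S2 SR); simpl; eauto.
  - apply S3; simpl; eauto.
  - apply C1; eauto.
  - exact (C2 SL _ _).
  - exact (C2 SR _ _).
  - apply C1; eauto.
Qed.

Lemma valid_fwd t : valid t ->
  exists P Q, fwd P (tlab t) Q /\ path P (tsrc t) /\ path P (ttgt t).
Proof.
  destruct t as [[|] X th Y]; unfold valid; simpl; intros H.
  - exists X, Y; eauto using path_refl, fwd_path.
  - exists Y, X; eauto using path_refl, fwd_path.
Qed.

Lemma connected_conn t1 t2 :
  valid t1 -> valid t2 -> connected t1 t2 -> conn (tlab t1) (tlab t2).
Proof.
  intros V1 V2 Hc.
  destruct (valid_fwd _ V1) as (P1 & Q1 & F1 & Src1 & Tgt1).
  destruct (valid_fwd _ V2) as (P2 & Q2 & F2 & Src2 & Tgt2).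
  apply (path_fwd_conn _ _ _ F1 P2 _ Q2); [| exact F2].
  destruct Hc as [Hc | Hc].
  - exact (path_trans _ _ _ Src1 (path_trans _ _ _ Hc (path_sym _ _ Tgt2))).
  - exact (path_trans _ _ _ Tgt1 (path_sym _ _ (path_trans _ _ _ Src2 Hc))).
Qed.

Definition fill (o : op) (X Y : proc) : proc :=
  match o with
  | OPar SL => Par X Y
  | OPar SR => Par Y X
  | OSum SL => Sum X Y
  | OSum SR => Sum Y X
  end.

Definition co_op (o : op) : op :=
  match o with OPar d => OPar (co_side d) | OSum d => OSum (co_side d) end.

Lemma fill_co_op o X Y : fill (co_op o) Y X = fill o X Y.
Proof. destruct o as [[] | []]; reflexivity. Qed.

Lemma standard_fill o X Y : standard X -> standard Y -> standard (fill o X Y).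
Proof. unfold standard; destruct o as [[] | []]; simpl; intros -> ->; reflexivity. Qed.

Lemma not_in_standard k Y : standard Y -> ~ In k (keys Y).
Proof. unfold standard; intros ->; simpl; tauto. Qed.

Lemma fwd_fill o X t X' Y : fwd X t X' -> standard Y ->
  fwd (fill o X Y) (pre_op o t) (fill o X' Y).
Proof.
  intros H Y_std; destruct o as [[] | []]; simpl; constructor;
    auto using not_in_standard.
Qed.

Lemma fwd_syn_fill d u1 l u2 k X X' Y Y' :
  fwd X (comp d u1 l u2 k) X' -> fwd Y (comp (co_side d) u1 l u2 k) Y' ->
  fwd (fill (OPar d) X Y) (psyn u1 l u2 k) (fill (OPar d) X' Y').
Proof. destruct d; simpl; intros HX HY; apply f_syn; assumption. Qed.

Definition std_enabled (th : plabel) : Prop :=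
  exists S S', standard S /\ fwd S th S'.

Lemma std_enabled_pre_op o th : std_enabled th -> std_enabled (pre_op o th).
Proof.
  intros (S & S' & Std & H); exists (fill o S Nil), (fill o S' Nil); split.
  - apply standard_fill; [assumption | reflexivity].
  - apply fwd_fill; [assumption | reflexivity].
Qed.

Lemma std_enabled_act u a k : std_enabled (PAct u a k).
Proof.
  induction u as [| o u IH].
  - exists (Pref a Nil), (Done a k Nil); split; [reflexivity | apply f_act; reflexivity].
  - exact (std_enabled_pre_op o _ IH).
Qed.

Lemma std_enabled_all th : std_enabled th.
Proof.
  destruct th as [u a k | u u1 l u2 k]; [apply std_enabled_act |].
  induction u as [| o u IH].
  - destruct (std_enabled_act u1 (Vis l) k) as (S1 & S1' & Std1 & H1).
    destruct (std_enabled_act u2 (Vis (co_vis l)) k) as (S2 & S2' & Std2 & H2).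
    exists (Par S1 S2), (Par S1' S2'); split.
    + apply (standard_fill (OPar SL)); assumption.
    + apply f_syn; assumption.
  - exact (std_enabled_pre_op o _ IH).
Qed.

Inductive avoiding_path (K : list key) : proc -> proc -> Prop :=
| ap_refl X : avoiding_path K X X
| ap_step X t Y Z : fwd X t Y -> ~ In (pkey t) K -> avoiding_path K Y Z ->
    avoiding_path K X Z.

Lemma avoiding_path_path K X Y : avoiding_path K X Y -> path X Y.
Proof.
  induction 1; [apply path_refl |]; eapply path_trans; eauto using fwd_path.
Qed.

Lemma avoiding_path_trans K X Y Z :
  avoiding_path K X Y -> avoiding_path K Y Z -> avoiding_path K X Z.
Proof. induction 1; intros; [assumption | econstructor; eauto]. Qed.

Lemma avoiding_path_incl K K' X Y :
  incl K K' -> avoiding_path K' X Y -> avoiding_path K X Y.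
Proof. intros Hincl; induction 1; econstructor; eauto. Qed.

Lemma avoiding_path_map K (f : proc -> proc) :
  (forall X t X', fwd X t X' -> ~ In (pkey t) K ->
     exists t', fwd (f X) t' (f X') /\ pkey t' = pkey t) ->
  forall X Y, avoiding_path K X Y -> avoiding_path K (f X) (f Y).
Proof.
  intros Hf X Y; induction 1 as [X | X t Y Z H Hk _ IH]; [constructor |].
  destruct (Hf _ _ _ H Hk) as (t' & H' & Ek).
  apply (ap_step K _ t' (f Y)); [exact H' | rewrite Ek; exact Hk | exact IH].
Qed.

Lemma pkey_pre_op o t : pkey (pre_op o t) = pkey t.
Proof. destruct t; reflexivity. Qed.

Lemma avoiding_path_fill K o X X' Y : standard Y ->
  avoiding_path K X X' -> avoiding_path K (fill o X Y) (fill o X' Y).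
Proof.
  intros Std; apply (avoiding_path_map K (fun X => fill o X Y)).
  intros X0 t X0' H _; exists (pre_op o t); split.
  - apply fwd_fill; assumption.
  - apply pkey_pre_op.
Qed.

Lemma avoiding_path_par_l K X X' Y : incl (keys Y) K ->
  avoiding_path K X X' -> avoiding_path K (Par X Y) (Par X' Y).
Proof.
  intros Hincl; apply (avoiding_path_map K (fun X => Par X Y)).
  intros X0 t X0' H Hk; exists (ppar SL t); split.
  - apply f_parL; [assumption | intros Hin; exact (Hk (Hincl _ Hin))].
  - apply pkey_pre_op.
Qed.

Lemma avoiding_path_par K S P T Q : standard S ->
  avoiding_path K T Q -> avoiding_path (K ++ keys Q) S P ->
  avoiding_path K (Par S T) (Par P Q).
Proof.
  intros Std HT HS.
  apply avoiding_path_trans with (Par S Q).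
  - exact (avoiding_path_fill K (OPar SR) _ _ _ Std HT).
  - apply avoiding_path_incl with (K ++ keys Q); [apply incl_appl, incl_refl |].
    apply avoiding_path_par_l; [apply incl_appr, incl_refl | exact HS].
Qed.

Definition enabled_from (K : list key) (S : proc) (th : plabel) : Prop :=
  exists P P', avoiding_path K S P /\ fwd P th P'.

Definition jointly_enabled (th1 th2 : plabel) : Prop :=
  forall K : list key, exists S,
    standard S /\ enabled_from K S th1 /\ enabled_from K S th2.

Lemma jointly_enabled_sym th1 th2 :
  jointly_enabled th1 th2 -> jointly_enabled th2 th1.
Proof. intros H K; destruct (H K) as (S & Std & E1 & E2); exists S; auto. Qed.

Lemma enabled_from_fwd K S th S' : fwd S th S' -> enabled_from K S th.
Proof. intros H; exists S, S'; split; [constructor | exact H]. Qed.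

Lemma enabled_from_fill K o S Y th : standard Y ->
  enabled_from K S th -> enabled_from K (fill o S Y) (pre_op o th).
Proof.
  intros Std (P & P' & HS & H); exists (fill o P Y), (fill o P' Y); split.
  - apply avoiding_path_fill; assumption.
  - apply fwd_fill; assumption.
Qed.

Lemma fresh_key (L : list key) : ~ In (S (list_max L)) L.
Proof.
  intros Hin.
  assert (Hle : S (list_max L) <= list_max L).
  { exact (proj1 (Forall_forall _ L) (proj1 (list_max_le L _) (le_n _)) _ Hin). }
  lia.
Qed.

(* Fire [a] with the key [k], or with a fresh key and then [th] underneath. *)
Lemma jointly_enabled_prefix a k th : jointly_enabled (PAct [] a k) th.
Proof.
  intros K; destruct (std_enabled_all th) as (X & X' & Std & H).
  set (k' := S (list_max (pkey th :: K))).
  assert (Hk' : ~ In k' (pkey th :: K)) by apply fresh_key.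
  exists (Pref a X); split; [exact Std |]; split.
  - apply enabled_from_fwd with (Done a k X); apply f_act; exact Std.
  - exists (Done a k' X), (Done a k' X'); split.
    + apply (ap_step K _ (PAct [] a k') (Done a k' X)); [apply f_act; exact Std | | constructor].
      intros Hin; apply Hk'; right; exact Hin.
    + apply f_pre; [exact H |]; intros E; apply Hk'; left; exact E.
Qed.

Lemma jointly_enabled_pre_op o th1 th2 :
  jointly_enabled th1 th2 -> jointly_enabled (pre_op o th1) (pre_op o th2).
Proof.
  intros H K; destruct (H K) as (S & Std & E1 & E2).
  exists (fill o S Nil); split; [apply standard_fill; [exact Std | reflexivity] |].
  split; apply enabled_from_fill; solve [assumption | reflexivity].
Qed.

Lemma jointly_enabled_co_op o th1 th2 :
  jointly_enabled (pre_op o th1) (pre_op (co_op o) th2).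
Proof.
  intros K.
  destruct (std_enabled_all th1) as (S1 & S1' & Std1 & H1).
  destruct (std_enabled_all th2) as (S2 & S2' & Std2 & H2).
  exists (fill o S1 S2); split; [apply standard_fill; assumption |]; split.
  - apply enabled_from_fwd with (fill o S1' S2); apply fwd_fill; assumption.
  - rewrite <- fill_co_op.
    apply enabled_from_fwd with (fill (co_op o) S2' S1); apply fwd_fill; assumption.
Qed.

Lemma jointly_enabled_par_syn d th u1 l u2 k :
  jointly_enabled th (comp d u1 l u2 k) ->
  jointly_enabled (ppar d th) (psyn u1 l u2 k).
Proof.
  intros H K; destruct (H K) as (S & Std & E1 & (P & P' & HS & HP)).
  destruct (std_enabled_all (comp (co_side d) u1 l u2 k)) as (T & T' & StdT & HT).
  exists (fill (OPar d) S T); split; [apply standard_fill; assumption |]; split.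
  - apply enabled_from_fill; assumption.
  - exists (fill (OPar d) P T), (fill (OPar d) P' T'); split.
    + apply avoiding_path_fill; assumption.
    + apply fwd_syn_fill; assumption.
Qed.

Lemma jointly_enabled_syn u1 l u2 k u1' l' u2' k' :
  jointly_enabled (comp SL u1 l u2 k) (comp SL u1' l' u2' k') ->
  jointly_enabled (comp SR u1 l u2 k) (comp SR u1' l' u2' k') ->
  jointly_enabled (psyn u1 l u2 k) (psyn u1' l' u2' k').
Proof.
  intros HL HR K.
  destruct (HR K) as (T & StdT & (Q1 & Q1' & HT1 & G1) & (Q2 & Q2' & HT2 & G2)).
  destruct (HL (K ++ keys Q1 ++ keys Q2))
    as (S & StdS & (P1 & P1' & HS1 & F1) & (P2 & P2' & HS2 & F2)).
  exists (Par S T); split; [apply (standard_fill (OPar SL)); assumption |]; split.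
  - exists (Par P1 Q1), (Par P1' Q1'); split; [| apply f_syn; assumption].
    apply avoiding_path_par; [assumption | assumption |].
    apply avoiding_path_incl with (K ++ keys Q1 ++ keys Q2); [| assumption].
    apply incl_app; [apply incl_appl | apply incl_appr, incl_appl]; apply incl_refl.
  - exists (Par P2 Q2), (Par P2' Q2'); split; [| apply f_syn; assumption].
    apply avoiding_path_par; [assumption | assumption |].
    apply avoiding_path_incl with (K ++ keys Q1 ++ keys Q2); [| assumption].
    apply incl_app; [apply incl_appl | apply incl_appr, incl_appr]; apply incl_refl.
Qed.

Lemma conn_jointly_enabled th1 th2 : conn th1 th2 -> jointly_enabled th1 th2.
Proof.
  induction 1.
  - apply jointly_enabled_prefix.
  - apply jointly_enabled_sym, jointly_enabled_prefix.
  - apply jointly_enabled_pre_op; assumption.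
  - exact (jointly_enabled_co_op (OPar d) t t').
  - apply jointly_enabled_pre_op; assumption.
  - exact (jointly_enabled_co_op (OSum d) t t').
  - apply jointly_enabled_par_syn; assumption.
  - apply jointly_enabled_sym, jointly_enabled_par_syn, jointly_enabled_sym; assumption.
  - apply jointly_enabled_syn; assumption.
Qed.

Lemma conn_connected th1 th2 : conn th1 th2 ->
  exists t1 t2 : trans,
    valid t1 /\ valid t2 /\ tlab t1 = th1 /\ tlab t2 = th2 /\
    reachable (tsrc t1) /\ reachable (tsrc t2) /\ connected t1 t2.
Proof.
  intros H; destruct (conn_jointly_enabled _ _ H []) as
    (S & Std & (P1 & P1' & HS1 & F1) & (P2 & P2' & HS2 & F2)).
  apply avoiding_path_path in HS1, HS2.
  exists (mkTrans Fw P1 th1 P1'), (mkTrans Fw P2 th2 P2'); unfold valid; simpl.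
  repeat split; try assumption.
  - exists S; split; assumption.
  - exists S; split; assumption.
  - left; apply path_trans with S; [apply path_sym; assumption |].
    apply path_trans with P2; [assumption | apply fwd_path with th2; assumption].
Qed.

Theorem proposition4p4 :
  (forall t1 t2 : trans,
      valid t1 -> valid t2 ->
      reachable (tsrc t1) -> reachable (tsrc t2) ->
      connected t1 t2 -> conn (tlab t1) (tlab t2)) /\
  (forall th1 th2 : plabel,
      conn th1 th2 ->
      exists t1 t2 : trans,
        valid t1 /\ valid t2 /\ tlab t1 = th1 /\ tlab t2 = th2 /\
        reachable (tsrc t1) /\ reachable (tsrc t2) /\ connected t1 t2).
Proof.
  split.
  - intros t1 t2 V1 V2 _ _; apply connected_conn; assumption.
  - exact conn_connected.
Qed.
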